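(* Let $A$ be a finite nonempty set and let $M\le A^{A}$ be a monoid (under composition, containing $\mathrm{id}_A$). Then $M^{*}$ is a preclone, i.e., $\mathrm{id}_A\in M^{*}$ and $M^{*}$ is closed under the operations $\zeta$, $\tau$ and $\circ$. Moreover, $M^{*}$ is closed under $\nabla$ if and only if $C\subseteq M$, where $C=\{\mathbf c_a\mid a\in A\}$ is the set of all constant unary maps $\mathbf c_a(x)=a$.
   Context: $\mathrm{Op}(A)$ denotes the set of all operations $f:A^n\to A$, $n\ge 1$. For $f\in\mathrm{Op}(A)$ of arity $n$, $i\in\{1,\dots,n\}$ and $\mathbf a=(a_1,\dots,a_{i-1},a_{i+1},\dots,a_n)\in A^{n-1}$, the translation $f_{\mathbf a,i}$ is the unary map $x\mapsto f(a_1,\dots,a_{i-1},x,a_{i+1},\dots,a_n)$; $\mathrm{trl}(f)$ is the set of all such translations (for unary $f$, $\mathrm{trl}(f)=\{f\}$). For $M\subseteq A^A$, $M^{*}:=\{f\in\mathrm{Op}(A)\mid \mathrm{trl}(f)\subseteq M\}$. For $f$ $n$-ary and $g$ $m$-ary: $(\zeta f)(x_1,\dots,x_n)=f(x_2,\dots,x_n,x_1)$ (and $\zeta f=f$ if $n=1$); $(\tau f)(x_1,x_2,x_3,\dots,x_n)=f(x_2,x_1,x_3,\dots,x_n)$ (and $\tau f=f$ if $n=1$); $(f\circ g)(x_1,\dots,x_{m+n-1})=f(g(x_1,\dots,x_m),x_{m+1},\dots,x_{m+n-1})$; $(\nabla f)(x_1,\dots,x_{n+1})=f(x_2,\dots,x_{n+1})$.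 A preclone is a subset of $\mathrm{Op}(A)$ containing $\mathrm{id}_A$ and closed under $\zeta,\tau,\circ$. *)

From mathcomp Require Import all_boot.
Set Implicit Arguments. Unset Strict Implicit. Unset Printing Implicit Defensive.

(* An operation on A of arity n >= 1 is stored with arity field n-1:
   its arguments are a finite function 'I_(n-1).+1 -> A (a tuple in A^n). *)
 
Record Op (A : finType) := mkOp {
  arity : nat;
  fn : {ffun 'I_arity.+1 -> A} -> A }.

Arguments arity {A} o.
Arguments fn {A} o _.

Section Ops.
Variable A : finType.

Definition idop : Op A := @mkOp A 0 (fun x => x ord0).

(* translation f_{a,i}: the i-th argument is the variable x, the others
   are taken from a (the i-th component of a is ignored) *)
Definition transl (f : Op A) (i : 'I_(arity f).+1)
    (a : {ffun 'I_(arity f).+1 -> A}) : {ffun A -> A} :=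
  [ffun x => fn f [ffun j => if j == i then x else a j]].

Definition star (M : {set {ffun A -> A}}) (f : Op A) : Prop :=
  forall (i : 'I_(arity f).+1) (a : {ffun 'I_(arity f).+1 -> A}),
    transl i a \in M.

(* zeta f (x_1,...,x_n) = f (x_2,...,x_n,x_1) ; identity when n = 1 *)
Definition zeta (f : Op A) : Op A :=
  @mkOp A (arity f) (fun x => fn f [ffun k => x (ordS k)]).

Definition swap01 (n : nat) (k : 'I_n.+1) : 'I_n.+1 :=
  if n is 0 then k
  else inord (if val k == 0 then 1 else if val k == 1 then 0 else val k).

Definition tau (f : Op A) : Op A :=
  @mkOp A (arity f) (fun x => fn f [ffun k => x (swap01 k)]).

(* (f o g)(x_1..x_{m+n-1}) = f (g (x_1..x_m), x_{m+1}, ..., x_{m+n-1});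
   with n = p+1, m = q+1 the result has arity q+p+1 *)
Definition comp (f g : Op A) : Op A :=
  @mkOp A (arity g + arity f) (fun x =>
    fn f [ffun k : 'I_(arity f).+1 =>
            if val k == 0
            then fn g [ffun j : 'I_(arity g).+1 => x (inord (val j))]
            else x (inord (arity g + val k))]).

Definition nabla (f : Op A) : Op A :=
  @mkOp A (arity f).+1 (fun x => fn f [ffun k => x (lift ord0 k)]).

Definition preclone (P : Op A -> Prop) : Prop :=
  [/\ P idop,
      (forall f, P f -> P (zeta f)),
      (forall f, P f -> P (tau f)) &
      (forall f g, P f -> P g -> P (comp f g))].

Definition nabla_closed (P : Op A -> Prop) : Prop :=
  forall f, P f -> P (nabla f).

Definition monoid_of_maps (M : {set {ffun A -> A}}) : Prop :=
  [ffun x => x] \in M /\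
  (forall f g, f \in M -> g \in M -> [ffun x => f (g x)] \in M).

End Ops.

From Pilot Require Import Defs.
From mathcomp Require Import all_boot.
From mathcomp Require Import zify.

(* Every translation of [zeta f] or [tau f] is a translation of [f] with its
   arguments permuted.  A translation of [comp f g] moving a variable of [g] is
   a translation of [f] at its first place composed with a translation of [g];
   one moving a variable of [f] is a translation of [f], with the value of [g]
   frozen into the constant arguments.  A translation of [nabla f] is either a
   translation of [f] or, in the dummy variable, a constant map; conversely every
   constant map is a translation of [nabla idop] in its dummy variable. *)

Section Translations.
Variable A : finType.

Lemma transl_idop i (a : {ffun 'I_1 -> A}) : transl (f := idop A) i a = [ffun x => x].
Proof. by apply/ffunP => x; rewrite !ffunE /= ffunE ord1. Qed.

Lemma transl_reindex (f : Op A) (s : 'I_(arity f).+1 -> 'I_(arity f).+1)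
    (s_inj : injective s) i a :
  transl (f := @mkOp A (arity f) (fun x => fn f [ffun k => x (s k)])) i a
  = transl (invF s_inj i) [ffun k => a (s k)].
Proof.
apply/ffunP => x; rewrite !ffunE /=; congr (fn f _).
apply/ffunP => k; rewrite !ffunE.
have -> : (s k == i) = (k == invF s_inj i).
  by apply/eqP/eqP => [<-|->]; [rewrite invF_f | rewrite f_invF].
by case: eqP.
Qed.

Lemma swap01_inj n : injective (@swap01 n).
Proof.
case: n => [//|n] i j; rewrite /swap01 => /(congr1 (@nat_of_ord _)).
have i_lt := ltn_ord i; have j_lt := ltn_ord j.
rewrite !inordK; try by (do 2 case: ifP => //); lia.
move=> E; apply/val_inj; move: E => /=.
case: (eqVneq (nat_of_ord i) 0) => ?; case: (eqVneq (nat_of_ord j) 0) => ? //=;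
case: (eqVneq (nat_of_ord i) 1) => ?; case: (eqVneq (nat_of_ord j) 1) => ? //=; lia.
Qed.

Variables f g : Op A.

Lemma transl_comp_inner (i : 'I_(arity g + arity f).+1) a : i <= arity g ->
  transl (f := Defs.comp f g) i a
  = [ffun x => transl ord0 [ffun k : 'I_(arity f).+1 => a (inord (arity g + k))]
                 (transl (inord i) [ffun j : 'I_(arity g).+1 => a (inord j)] x)].
Proof.
move=> i_le; apply/ffunP => x; rewrite !ffunE /=; congr (fn f _).
apply/ffunP => k; rewrite !ffunE.
have k_lt := ltn_ord k.
case: (eqVneq k ord0) => [-> | k_neq0] /=.
  congr (fn g _); apply/ffunP => j; rewrite !ffunE.
  have j_lt := ltn_ord j.
  suff -> : (inord j == i) = (j == inord i) by [].
  by rewrite -!val_eqE /= !inordK //; lia.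
have k_pos : k != 0 :> nat by rewrite -[k == _]val_eqE in k_neq0.
rewrite (negbTE k_pos); suff -> : (inord (arity g + k) == i) = false by [].
by apply/negbTE; rewrite -val_eqE /= inordK; lia.
Qed.

Lemma transl_comp_outer (i : 'I_(arity g + arity f).+1) a : arity g < i ->
  transl (f := Defs.comp f g) i a
  = transl (inord (i - arity g))
      [ffun k : 'I_(arity f).+1 => if val k == 0
         then fn g [ffun j : 'I_(arity g).+1 => a (inord j)]
         else a (inord (arity g + k))].
Proof.
move=> lt_i; have i_lt := ltn_ord i.
apply/ffunP => x; rewrite !ffunE /=; congr (fn f _).
apply/ffunP => k; rewrite !ffunE.
have k_lt := ltn_ord k.
case: (eqVneq (nat_of_ord k) 0) => k0 /=.
  have -> : (k == inord (i - arity g)) = false.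
    by apply/negbTE; rewrite -val_eqE /= inordK; lia.
  congr (fn g _); apply/ffunP => j; rewrite !ffunE.
  have j_lt := ltn_ord j.
  suff -> : (inord j == i) = false by [].
  by apply/negbTE; rewrite -val_eqE /= inordK; lia.
suff -> : (inord (arity g + k) == i) = (k == inord (i - arity g)) by [].
by rewrite -!val_eqE /= !inordK; lia.
Qed.

Lemma transl_nabla_lift i a :
  transl (f := nabla f) (lift ord0 i) a = transl i [ffun k => a (lift ord0 k)].
Proof.
apply/ffunP => x; rewrite !ffunE /=; congr (fn f _); apply/ffunP => k.
by rewrite !ffunE (inj_eq (@lift_inj _ ord0)).
Qed.

Lemma transl_nabla0 a :
  transl (f := nabla f) ord0 a = [ffun _ => fn f [ffun k => a (lift ord0 k)]].
Proof.
apply/ffunP => x; rewrite !ffunE /=; congr (fn f _); apply/ffunP => k.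
by rewrite !ffunE eq_sym (negbTE (neq_lift _ _)).
Qed.

End Translations.

Section Star.
Variables (A : finType) (M : {set {ffun A -> A}}).
Hypothesis monoid_M : monoid_of_maps M.

Lemma star_idop : star M (idop A).
Proof. by move=> i a; rewrite transl_idop; case: monoid_M. Qed.

Lemma star_reindex (f : Op A) (s : 'I_(arity f).+1 -> 'I_(arity f).+1) :
  injective s -> star M f ->
  star M (@mkOp A (arity f) (fun x => fn f [ffun k => x (s k)])).
Proof. by move=> s_inj star_f i a; rewrite transl_reindex. Qed.

Lemma star_zeta f : star M f -> star M (zeta f).
Proof. exact/star_reindex/ordS_inj. Qed.

Lemma star_tau f : star M f -> star M (tau f).
Proof. exact/star_reindex/swap01_inj. Qed.

Lemma star_comp f g : star M f -> star M g -> star M (Defs.comp f g).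
Proof.
move=> star_f star_g i a; case: (leqP i (arity g)) => [i_le | lt_i].
  by rewrite transl_comp_inner //; case: monoid_M => _; apply.
by rewrite transl_comp_outer.
Qed.

Lemma star_preclone : preclone (star M).
Proof. split; [exact: star_idop | exact: star_zeta | exact: star_tau | exact: star_comp]. Qed.

Lemma star_nabla_closedP :
  nabla_closed (star M) <-> (forall a : A, [ffun _ : A => a] \in M).
Proof.
split=> [nabla_star b | constM f star_f i a].
  have -> : [ffun _ : A => b] = transl (f := nabla (idop A)) ord0 [ffun _ => b].
    by apply/ffunP => x; rewrite !ffunE /= !ffunE.
  exact: nabla_star star_idop _ _.
case: (unliftP ord0 i) => [i' ->|->].
  by rewrite transl_nabla_lift; apply: star_f.
by rewrite transl_nabla0; apply: constM.
Qed.

End Star.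

Theorem proposition2p5 (A : finType) (HA : 0 < #|A|)
    (M : {set {ffun A -> A}}) (HM : monoid_of_maps M) :
  preclone (star M) /\
  (nabla_closed (star M) <-> (forall a : A, [ffun _ : A => a] \in M)).
Proof.
split; [exact: star_preclone | exact: star_nabla_closedP].
Qed.
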